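(* Let $a=a_0+a_1e_1+a_2e_2+a_3e_3\in C\ell_2\setminus\mathbb{R}$. Then there exists $u\in C\ell_2\setminus Z(C\ell_2)$ such that $$u^{-1}au=\begin{cases} a_0+\sqrt{G(a)}\,e_2, & G(a)>0;\\ a_0+\sqrt{-G(a)}\,e_3, & G(a)<0;\\ a_0+e_2+e_3, & G(a)=0.\end{cases}$$
   Context: $C\ell_2$ is the 4-dimensional real associative algebra with basis $1,e_1,e_2,e_3$ and multiplication $e_1^2=e_2^2=1$, $e_3^2=-1$, $e_1e_2=e_3=-e_2e_1$, $e_1e_3=e_2=-e_3e_1$, $e_3e_2=e_1=-e_2e_3$; $\mathbb{R}$ is identified with $\mathbb{R}\cdot1$. For $a=a_0+a_1e_1+a_2e_2+a_3e_3$: $G(a)=a_1^2+a_2^2-a_3^2$, $H_a=a_0^2-a_1^2-a_2^2+a_3^2$; $Z(C\ell_2)=\{a:H_a=0\}$, and elements outside $Z(C\ell_2)$ are invertible. *)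

From Stdlib Require Import Reals.
Open Scope R_scope.

(* a = c0 + c1 e1 + c2 e2 + c3 e3 *)
Record Cl2 := mkCl2 { c0 : R; c1 : R; c2 : R; c3 : R }.

(* Multiplication from e1^2=e2^2=1, e3^2=-1, e1e2=e3=-e2e1,
   e1e3=e2=-e3e1, e3e2=e1=-e2e3. *)
Definition cmul (a b : Cl2) : Cl2 :=
  mkCl2 (c0 a * c0 b + c1 a * c1 b + c2 a * c2 b - c3 a * c3 b)
        (c0 a * c1 b + c1 a * c0 b - c2 a * c3 b + c3 a * c2 b)
        (c0 a * c2 b + c2 a * c0 b + c1 a * c3 b - c3 a * c1 b)
        (c0 a * c3 b + c3 a * c0 b + c1 a * c2 b - c2 a * c1 b).

Definition cone : Cl2 := mkCl2 1 0 0 0.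
Definition creal (r : R) : Cl2 := mkCl2 r 0 0 0.

Definition G (a : Cl2) : R := c1 a ^ 2 + c2 a ^ 2 - c3 a ^ 2.
Definition H (a : Cl2) : R := c0 a ^ 2 - c1 a ^ 2 - c2 a ^ 2 + c3 a ^ 2.

(* membership in Z(Cl_2) = {a : H_a = 0} *)
Definition inZ (a : Cl2) : Prop := H a = 0.
Definition is_real (a : Cl2) : Prop := exists r : R, a = creal r.

Definition is_inverse (u v : Cl2) : Prop := cmul u v = cone /\ cmul v u = cone.

(** Write [a = a0 + v] and let [w] be the vector part of the proposed normal
    form [b = a0 + w]; both satisfy [v^2 = w^2 = G(a)], a real scalar.  Hence
    for every [e] the element [u = v e + e w] intertwines them:
    [v u = G(a) e + v e w = u w], so [a u = u b], and it remains to choose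
    [e] with [H u <> 0].  If [G(a) <> 0] then [e = 1] or [e = e1] works, since
    [H(v + w) + H(v - w) = -2 (G v + G w)] and [e1] anticommutes with [w].  If
    [G(a) = 0] then [e = 1] or [e = e2] works, for otherwise [v = 0]. *)

From Pilot Require Import Defs.
From Stdlib Require Import Reals Lra Psatz.
Open Scope R_scope.

(* [Reals] also exports an unrelated constant [c1]. *)
Local Notation c1 := Defs.c1.

Definition cadd (x y : Cl2) : Cl2 :=
  mkCl2 (c0 x + c0 y) (c1 x + c1 y) (c2 x + c2 y) (c3 x + c3 y).

Definition e1 : Cl2 := mkCl2 0 1 0 0.
Definition e2 : Cl2 := mkCl2 0 0 1 0.

Definition vec (a : Cl2) : Cl2 := mkCl2 0 (c1 a) (c2 a) (c3 a).

Definition cinv (u : Cl2) : Cl2 :=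
  mkCl2 (c0 u / H u) (- c1 u / H u) (- c2 u / H u) (- c3 u / H u).

Definition intertwiner (v w e : Cl2) : Cl2 := cadd (cmul v e) (cmul e w).

Definition normal_form (a : Cl2) : Cl2 :=
  if Rlt_dec 0 (G a) then mkCl2 (c0 a) 0 (sqrt (G a)) 0
  else if Rlt_dec (G a) 0 then mkCl2 (c0 a) 0 0 (sqrt (- G a))
  else mkCl2 (c0 a) 0 1 1.

Lemma cadd_comm x y : cadd x y = cadd y x.
Proof. destruct x, y; unfold cadd; simpl; f_equal; ring. Qed.

Lemma cmul_assoc x y z : cmul (cmul x y) z = cmul x (cmul y z).
Proof. destruct x, y, z; unfold cmul; simpl; f_equal; ring. Qed.

Lemma cmul_1l x : cmul cone x = x.
Proof. destruct x; unfold cmul, cone; simpl; f_equal; ring. Qed.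

Lemma cmul_addl x y z : cmul (cadd x y) z = cadd (cmul x z) (cmul y z).
Proof. destruct x, y, z; unfold cmul, cadd; simpl; f_equal; ring. Qed.

Lemma cmul_addr x y z : cmul x (cadd y z) = cadd (cmul x y) (cmul x z).
Proof. destruct x, y, z; unfold cmul, cadd; simpl; f_equal; ring. Qed.

Lemma creal_central r x : cmul (creal r) x = cmul x (creal r).
Proof. destruct x; unfold cmul, creal; simpl; f_equal; ring. Qed.

Lemma cl2_decomp a : a = cadd (creal (c0 a)) (vec a).
Proof. destruct a; unfold cadd, creal, vec; simpl; f_equal; ring. Qed.

Lemma vec_sqr a : cmul (vec a) (vec a) = creal (G a).
Proof. destruct a; unfold cmul, vec, creal, G; simpl; f_equal; ring. Qed.

Lemma real_of_vec_eq0 a : c1 a = 0 -> c2 a = 0 -> c3 a = 0 -> is_real a.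
Proof. destruct a as [x y z w]; simpl; intros -> -> ->; exists x; reflexivity. Qed.

Lemma cinv_inverse u : H u <> 0 -> is_inverse u (cinv u).
Proof.
  destruct u as [x y z w]; unfold H; cbn [c0 Defs.c1 c2 c3]; intros Hu.
  split; unfold cinv, H, cmul, cone; cbn [c0 Defs.c1 c2 c3]; f_equal; field; exact Hu.
Qed.

Lemma conj_of_intertwined u v a b :
  cmul v u = cone -> cmul a u = cmul u b -> cmul (cmul v a) u = b.
Proof.
  intros Hvu Hab.
  rewrite cmul_assoc, Hab, <- cmul_assoc, Hvu; apply cmul_1l.
Qed.

Lemma intertwiner_vec a b e : G a = G b ->
  cmul (vec a) (intertwiner (vec a) (vec b) e) =
  cmul (intertwiner (vec a) (vec b) e) (vec b).
Proof.
  intros HG; unfold intertwiner.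
  rewrite cmul_addr, cmul_addl, !cmul_assoc, <- (cmul_assoc (vec a) (vec a)).
  rewrite !vec_sqr, HG, creal_central; apply cadd_comm.
Qed.

Lemma intertwinerP a b e : c0 a = c0 b -> G a = G b ->
  cmul a (intertwiner (vec a) (vec b) e) = cmul (intertwiner (vec a) (vec b) e) b.
Proof.
  intros H0 HG; set (u := intertwiner (vec a) (vec b) e).
  rewrite (cl2_decomp a), (cl2_decomp b), H0, cmul_addl, cmul_addr, creal_central.
  unfold u; rewrite intertwiner_vec by exact HG; reflexivity.
Qed.

Lemma H_intertwiner_1_e1 a b : c1 b = 0 ->
  H (intertwiner (vec a) (vec b) cone) - H (intertwiner (vec a) (vec b) e1) =
  -2 * (G a + G b).
Proof.
  destruct a, b; unfold H, G, intertwiner, vec, cadd, cmul, cone, e1; simpl.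
  intros ->; ring.
Qed.

Lemma H_intertwiner_isotropic a :
  H (intertwiner (vec a) (mkCl2 0 0 1 1) cone) = - G a - 2 * (c2 a - c3 a) /\
  H (intertwiner (vec a) (mkCl2 0 0 1 1) e2) = G a + 2 * (c2 a + c3 a).
Proof.
  destruct a; unfold H, G, intertwiner, vec, cadd, cmul, cone, e2; simpl.
  split; ring.
Qed.

Lemma c0_normal_form a : c0 (normal_form a) = c0 a.
Proof.
  unfold normal_form.
  destruct (Rlt_dec 0 (G a)); [|destruct (Rlt_dec (G a) 0)]; reflexivity.
Qed.

Lemma c1_normal_form a : c1 (normal_form a) = 0.
Proof.
  unfold normal_form.
  destruct (Rlt_dec 0 (G a)); [|destruct (Rlt_dec (G a) 0)]; reflexivity.
Qed.

Lemma G_normal_form a : G (normal_form a) = G a.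
Proof.
  unfold normal_form, G at 1.
  destruct (Rlt_dec 0 (G a)) as [Gpos|Gpos]; cbn [Defs.c1 c2 c3].
  { rewrite pow2_sqrt by lra; ring. }
  destruct (Rlt_dec (G a) 0) as [Gneg|Gneg]; cbn [Defs.c1 c2 c3].
  { rewrite pow2_sqrt by lra; ring. }
  lra.
Qed.

Lemma vec_normal_form_isotropic a : G a = 0 -> vec (normal_form a) = mkCl2 0 0 1 1.
Proof.
  intros G0; unfold normal_form; rewrite G0.
  destruct (Rlt_dec 0 0); [lra|]; destruct (Rlt_dec 0 0); [lra|]; reflexivity.
Qed.

Lemma exists_invertible_intertwiner a : ~ is_real a ->
  exists e, H (intertwiner (vec a) (vec (normal_form a)) e) <> 0.
Proof.
  intros Ha; set (b := normal_form a).
  destruct (Req_dec (H (intertwiner (vec a) (vec b) cone)) 0) as [Z1|Z1];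
    [|exists cone; exact Z1].
  destruct (Req_dec (G a) 0) as [G0|G0].
  - exists e2; intro Z2; apply Ha.
    unfold b in *; rewrite vec_normal_form_isotropic in * by exact G0.
    destruct (H_intertwiner_isotropic a) as [H1 H2].
    assert (c2 a = 0 /\ c3 a = 0) as [A2 A3] by lra.
    unfold G in G0; apply real_of_vec_eq0; [nra|exact A2|exact A3].
  - exists e1; intro Z2; apply G0.
    pose proof (H_intertwiner_1_e1 a b (c1_normal_form a)) as Hpar.
    pose proof (G_normal_form a) as HG; fold b in HG; lra.
Qed.

Theorem lemma5p3 (a : Cl2) :
  ~ is_real a ->
  exists u uinv : Cl2,
    ~ inZ u /\ is_inverse u uinv /\
    cmul (cmul uinv a) u =
      (if Rlt_dec 0 (G a) then mkCl2 (c0 a) 0 (sqrt (G a)) 0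
       else if Rlt_dec (G a) 0 then mkCl2 (c0 a) 0 0 (sqrt (- G a))
       else mkCl2 (c0 a) 0 1 1).
Proof.
  intros Ha.
  destruct (exists_invertible_intertwiner a Ha) as [e Hu].
  set (u := intertwiner (vec a) (vec (normal_form a)) e) in Hu.
  pose proof (cinv_inverse u Hu) as Hinv.
  exists u, (cinv u); split; [exact Hu|split; [exact Hinv|]].
  apply (conj_of_intertwined u), intertwinerP.
  - apply Hinv.
  - symmetry; apply c0_normal_form.
  - symmetry; apply G_normal_form.
Qed.
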